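(* Let $R\subseteq\mathcal{D}^\Sigma$ with $n=|\Sigma|$ and let $k\ge0$ be an integer with $|R|\le|\mathcal{D}|^k$. Then there exist a set $\textup{T}$ of $k$ attributes with $\textup{T}\cap\Sigma=\emptyset$ and $\widehat R\subseteq\mathcal{D}^{\textup{T}\cup\Sigma}$ such that $$R=\pi_\Sigma\Big[\Join_{i\in\Sigma}\pi_{\textup{T}\cup\{i\}}\widehat R\Big],$$ i.e. with $\textup{T}=\{t_1,\dots,t_k\}$ and $R_i=\pi_{\textup{T}\cup\{i\}}\widehat R$, $R(x)\iff\exists t_1\dots\exists t_k\,[\bigwedge_{i\in\Sigma}R_i(t_1,\dots,t_k,x_i)]$. In particular, $R$ is projoin reducible when $k\le n-2$, and projoin reducible to binaries when $k=1$.
   Context: Attributed relation: $R\subseteq\mathcal{D}^\Sigma$, $\Sigma$ a finite set of attributes; $\pi_\Lambda R=\{a|_\Lambda:a\in R\}$. The join of $R_i\subseteq\mathcal{D}^{\Lambda_i}$ is $\{a\in\mathcal{D}^{\cup_i\Lambda_i}: a|_{\Lambda_i}\in R_i\ \forall i\}$. $R\subseteq\mathcal{D}^\Sigma$ is a projoin over a cover $\textup{T}\cup\Sigma=\Lambda_1\cup\dots\cup\Lambda_m$ (with $\textup{T}\cap\Sigma=\emptyset$; elements of $\textup{T}$ are called parameters) if there are $R^{\Lambda_i}\subseteq\mathcal{D}^{\Lambda_i}$ with $R=\pi_\Sigma[R^{\Lambda_1}\Join\dots\Join R^{\Lambda_m}]$; it is projoin reducible if this holds with $0<|\Lambda_i|<|\Sigma|$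 for all $i$, and projoin reducible to binaries if moreover all $|\Lambda_i|=2$. *)

From HB Require Import structures.
From mathcomp Require Import all_boot.
From mathcomp Require Export finmap.
Set Implicit Arguments. Unset Strict Implicit. Unset Printing Implicit Defensive.
Local Open Scope fset_scope.

(* Attribute names are natural numbers (an unbounded supply of attributes).
   A tuple over the attribute set L, i.e. an element of D^L, is represented as
   a partial map  nat -> option D  whose domain is exactly L. *)
Definition tup (D : Type) := nat -> option D.

Definition tup_on (D : Type) (L : {fset nat}) (a : tup D) : Prop :=
  forall x, x \in L <-> a x <> None.

Definition relation (D : Type) := tup D -> Prop.

Definition rel_on (D : Type) (L : {fset nat}) (R : relation D) : Prop :=
  forall a, R a -> tup_on L a.

Definition rel_eq (D : Type) (R S : relation D) : Prop := forall a, R a <-> S a.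

Definition restr (D : Type) (L : {fset nat}) (a : tup D) : tup D :=
  fun x => if x \in L then a x else None.

Definition proj (D : Type) (L : {fset nat}) (R : relation D) : relation D :=
  fun b => exists a, R a /\ b = restr L a.

Definition bigU (I : finType) (L : I -> {fset nat}) : {fset nat} :=
  \big[@fsetU _/fset0]_(i : I) L i.

Definition join (D : Type) (I : finType) (L : I -> {fset nat})
    (Rs : I -> relation D) : relation D :=
  fun a => tup_on (bigU L) a /\ forall i, Rs i (restr (L i) a).

Definition card_le (A B : Type) : Prop := exists f : A -> B, injective f.

Definition projoin (D : Type) (Sig T : {fset nat}) (m : nat)
    (L : 'I_m -> {fset nat}) (R : relation D) : Prop :=
  T `&` Sig = fset0 /\ T `|` Sig = bigU L /\
  exists Rs : 'I_m -> relation D,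
    (forall i, rel_on (L i) (Rs i)) /\ rel_eq R (proj Sig (join L Rs)).

Definition projoin_reducible (D : Type) (Sig : {fset nat}) (R : relation D) : Prop :=
  exists (T : {fset nat}) (m : nat) (L : 'I_m -> {fset nat}),
    projoin Sig T L R /\ forall i, 0 < #|` L i| < #|` Sig|.

Definition projoin_reducible_bin (D : Type) (Sig : {fset nat}) (R : relation D) : Prop :=
  exists (T : {fset nat}) (m : nat) (L : 'I_m -> {fset nat}),
    projoin Sig T L R /\ forall i, 0 < #|` L i| < #|` Sig| /\ #|` L i| = 2.

From Pilot Require Import Defs.
From mathcomp Require Import all_boot finmap zify.
From Stdlib Require Import FunctionalExtensionality.
Set Implicit Arguments. Unset Strict Implicit. Unset Printing Implicit Defensive.
Local Open Scope fset_scope.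

(* Choose an injection f of R into D^k and k attributes T outside Sig, and
   let Rhat extend each a in R by its code f a, written on T.  If x lies in
   the projoin of the stars T u {i}, then for each i in Sig some a_i in R
   agrees with x at i, and all the a_i carry the same values on T; since f is
   injective they are all equal, hence x = a_i lies in R. *)

Lemma fsetI0_notin (A B : {fset nat}) x : A `&` B = fset0 -> x \in A -> x \notin B.
Proof. by move=> AB0; apply/fdisjointP; rewrite -fsetI_eq0 AB0. Qed.

Section Tuples.
Variable D : Type.

Lemma tup_on_None (L : {fset nat}) (a : tup D) x :
  tup_on L a -> x \notin L -> a x = None.
Proof.
by move=> aL /negP xL; case E: (a x) => [d|] //; case: xL; apply/aL; rewrite E.
Qed.

Lemma restr_on (L : {fset nat}) (a : tup D) : tup_on L a -> restr L a = a.
Proof.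
move=> aL; apply: functional_extensionality => x; rewrite /restr.
by case: ifPn => // xL; rewrite (tup_on_None aL xL).
Qed.

Lemma restr_eq_in (L : {fset nat}) (a b : tup D) :
  restr L a = restr L b -> {in L, a =1 b}.
Proof. by move=> E x xL; have := f_equal (@^~ x) E; rewrite /restr xL. Qed.

Lemma proj_on (L L' : {fset nat}) (S : relation D) :
  L `<=` L' -> rel_on L' S -> rel_on L (proj L S).
Proof.
move=> LL' SL' _ [a [Sa ->]] x; rewrite /restr.
case: ifPn => [xL|_]; last by split.
by split=> // _; apply/(SL' a Sa); apply: (fsubsetP LL').
Qed.

End Tuples.

Section FreshBlock.
Variable D : Type.

Definition fresh (S : {fset nat}) : nat := (\max_(x <- S) x).+1.

Lemma fresh_gt (S : {fset nat}) x : x \in S -> x < fresh S.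
Proof. by move=> xS; rewrite ltnS (@leq_bigmax_seq _ _ xpredT id x xS). Qed.

Definition block (n k : nat) : {fset nat} := [fset x in iota n k].

Lemma in_block n k x : (x \in block n k) = (n <= x < n + k).
Proof. by rewrite in_fset /= mem_iota. Qed.

Lemma card_block n k : #|` block n k| = k.
Proof. by rewrite card_fseq undup_id ?iota_uniq // size_iota. Qed.

Lemma block_disjoint n k (S : {fset nat}) :
  (forall x, x \in S -> x < n) -> block n k `&` S = fset0.
Proof.
move=> S_lt; apply/fsetP => x; rewrite in_fsetI in_block in_fset0.
by apply/negbTE/negP => /andP[/andP[nx _] /S_lt]; lia.
Qed.

(* The k-tuple c is written on the attributes n, ..., n + k - 1. *)
Definition block_tup n k (c : 'I_k -> D) : tup D :=
  fun x => if n <= x then omap c (insub (x - n)) else None.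

Lemma block_tup_on n k (c : 'I_k -> D) : tup_on (block n k) (block_tup n c).
Proof.
move=> x; rewrite in_block /block_tup; case: (leqP n x) => nx /=; last by split.
by case: insubP => [j jk _|/negP jk] /=; split=> //; lia.
Qed.

Lemma block_tupE n k (c : 'I_k -> D) (j : 'I_k) : block_tup n c (n + j)%N = Some (c j).
Proof.
rewrite /block_tup leq_addr addKn.
by case: insubP => [j' _ /val_inj -> //|/negP]; rewrite ltn_ord.
Qed.

Lemma block_tup_inj n k : injective (@block_tup n k).
Proof.
move=> c c' E; apply: functional_extensionality => j.
by have := f_equal (@^~ (n + j)%N) E; rewrite !block_tupE => -[].
Qed.

End FreshBlock.

Definition star (T : {fset nat}) (I : Type) (g : I -> nat) (i : I) : {fset nat} :=
  T `|` [fset g i].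

Lemma in_star (T : {fset nat}) (I : Type) (g : I -> nat) i x :
  (x \in star T g i) = (x \in T) || (x == g i).
Proof. by rewrite !inE. Qed.

Section StarCover.
Variables (T Sig : {fset nat}) (I : finType) (g : I -> nat) (i0 : I).
Hypotheses (g_in : forall i, g i \in Sig)
           (g_onto : forall x, x \in Sig -> exists i, g i = x).

Lemma bigU_star : Defs.bigU (star T g) = T `|` Sig.
Proof.
have star_sub i : star T g i `<=` Defs.bigU (star T g).
  by rewrite /Defs.bigU (bigD1 i) //= fsubsetUl.
apply/eqP; rewrite eqEfsubset; apply/andP; split.
  rewrite /Defs.bigU; apply: (big_ind (fun A => A `<=` T `|` Sig)) => [|A B|i _].
  - exact: fsub0set.
  - by move=> AS BS; rewrite fsubUset AS BS.
  - by rewrite fsetUS // fsub1set.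
rewrite fsubUset; apply/andP; split.
  exact: fsubset_trans (fsubsetUl _ _) (star_sub i0).
apply/fsubsetP => x /g_onto [i <-].
by apply: (fsubsetP (star_sub i)); rewrite in_star eqxx orbT.
Qed.

End StarCover.

Section StarDecomposition.
Variables (D : Type) (Sig T : {fset nat}) (R : relation D).
Hypotheses (R_on : rel_on Sig R) (T_Sig : T `&` Sig = fset0).
Variable code : {a : tup D | R a} -> tup D.
Hypotheses (code_on : forall a, tup_on T (code a)) (code_inj : injective code).

Definition glue (a : {a : tup D | R a}) : tup D :=
  fun x => if x \in Sig then sval a x else code a x.

Definition Rhat : relation D := fun b => exists a, b = glue a.

Lemma glue_on a : tup_on (T `|` Sig) (glue a).
Proof.
move=> x; rewrite inE /glue; case: ifPn => xS; last by rewrite orbF; apply: code_on.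
by rewrite orbT; have := R_on (svalP a) x; rewrite xS; tauto.
Qed.

Lemma Rhat_on : rel_on (T `|` Sig) Rhat.
Proof. by move=> _ [a ->]; apply: glue_on. Qed.

Lemma restr_glue a : restr Sig (glue a) = sval a.
Proof.
rewrite -[RHS](restr_on (R_on (svalP a))).
by apply: functional_extensionality => x; rewrite /restr /glue; case: (x \in Sig).
Qed.

Lemma glue_eq_in_T a a' : {in T, glue a =1 glue a'} -> a = a'.
Proof.
move=> E; apply: code_inj; apply: functional_extensionality => x.
case: (boolP (x \in T)) => xT; last by rewrite !(tup_on_None (code_on _) xT).
by have := E x xT; rewrite /glue (negbTE (fsetI0_notin T_Sig xT)).
Qed.

Variables (I : finType) (g : I -> nat) (i0 : I).
Hypotheses (g_in : forall i, g i \in Sig)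
           (g_onto : forall x, x \in Sig -> exists i, g i = x).

Let Rstar (i : I) : relation D := proj (star T g i) Rhat.

Lemma join_star_glue a : join (star T g) Rstar (glue a).
Proof.
split=> [|i]; first by rewrite (bigU_star T i0 g_in g_onto); apply: glue_on.
by exists (glue a); split=> //; exists a.
Qed.

Lemma join_star_glue_common b :
  join (star T g) Rstar b -> exists a, forall i, {in star T g i, b =1 glue a}.
Proof.
move=> [_ bRstar].
have glue_at i : exists a, {in star T g i, b =1 glue a}.
  by have [_ [[a ->] E]] := bRstar i; exists a; apply: restr_eq_in.
have [a0 b_a0] := glue_at i0; exists a0 => i.
have [a b_a] := glue_at i.
suff -> : a0 = a by [].
apply: glue_eq_in_T => x xT.
by rewrite -b_a0 ?b_a // inE xT.
Qed.

Lemma star_decomposition : rel_eq R (proj Sig (join (star T g) Rstar)).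
Proof.
move=> b; split=> [Rb | [c [c_join ->]]].
  exists (glue (exist _ b Rb)); split; first exact: join_star_glue.
  by rewrite restr_glue.
have [a c_a] := join_star_glue_common c_join.
suff -> : restr Sig c = restr Sig (glue a) by rewrite restr_glue; apply: svalP.
apply: functional_extensionality => x; rewrite /restr.
case: ifP => // /g_onto [i <-].
by apply: (c_a i); rewrite in_star eqxx orbT.
Qed.

End StarDecomposition.

Lemma star_projoin (D : Type) (Sig T : {fset nat}) (R Rhat : relation D)
    (m : nat) (h : 'I_m -> nat) (j0 : 'I_m) :
  T `&` Sig = fset0 -> rel_on (T `|` Sig) Rhat ->
  (forall j, h j \in Sig) -> (forall x, x \in Sig -> exists j, h j = x) ->
  rel_eq R (proj Sig (join (star T h) (fun j => proj (star T h j) Rhat))) ->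
  projoin Sig T (star T h) R.
Proof.
move=> T_Sig Rhat_on h_in h_onto R_eq; split=> //.
split; first by rewrite (bigU_star T j0 h_in h_onto).
exists (fun j => proj (star T h j) Rhat); split=> // j.
by apply: proj_on Rhat_on; rewrite fsetUS // fsub1set.
Qed.

Lemma card_star (T Sig : {fset nat}) (I : Type) (g : I -> nat) i :
  T `&` Sig = fset0 -> g i \in Sig -> #|` star T g i| = #|` T|.+1.
Proof.
move=> T_Sig g_in; rewrite /star fsetUC cardfsU1.
suff -> : g i \notin T by [].
by apply: contraL g_in; apply: fsetI0_notin.
Qed.

Theorem theorem21 (D : Type) (Sig : {fset nat}) (R : relation D) (k : nat) :
  Sig != fset0 ->
  rel_on Sig R ->
  card_le {a : tup D | R a} ('I_k -> D) ->
  (exists (T : {fset nat}) (Rhat : relation D),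
      #|` T| = k /\ T `&` Sig = fset0 /\ rel_on (T `|` Sig) Rhat /\
      rel_eq R
        (proj Sig (join (fun i : Sig => T `|` [fset val i])
                        (fun i : Sig => proj (T `|` [fset val i]) Rhat))))
  /\ (k + 2 <= #|` Sig| -> projoin_reducible Sig R)
  /\ (k = 1 -> 3 <= #|` Sig| -> projoin_reducible_bin Sig R).
Proof.
move=> Sig_neq0 R_on [f f_inj].
have [x0 x0_Sig] := fset0Pn Sig Sig_neq0.
pose T := block (fresh Sig) k.
have T_Sig : T `&` Sig = fset0 := block_disjoint k (@fresh_gt Sig).
pose code a := block_tup (fresh Sig) (f a).
have code_on a : tup_on T (code a) := block_tup_on _ _.
have code_inj : injective code by move=> a b /block_tup_inj /f_inj.
have decomp := star_decomposition R_on T_Sig code_on code_inj.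
pose m := #|{: Sig}|; pose h (j : 'I_m) := val (enum_val j).
have h_in j : h j \in Sig := valP _.
have h_onto x : x \in Sig -> exists j, h j = x.
  by move=> xS; exists (enum_rank [` xS]); rewrite /h enum_rankK.
pose j0 : 'I_m := enum_rank [` x0_Sig].
have R_projoin : projoin Sig T (star T h) R.
  apply: (star_projoin j0 T_Sig (Rhat_on R_on code_on) h_in h_onto).
  exact: decomp _ _ j0 h_in h_onto.
have card_h j : #|` star T h j| = k.+1 by rewrite (card_star T_Sig (h_in j)) card_block.
have card_Sig : #|` Sig| = m by rewrite cardfE.
split.
  exists T, (Rhat Sig code); split; first exact: card_block.
  split=> //; split; first exact: Rhat_on.
  by apply: (decomp _ val [` x0_Sig] (@fsvalP _ _)) => x xS; exists [` xS].
by split=> [k_le | k1 k_ge]; exists T, m, (star T h); split=> // j; rewrite card_h; lia.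
Qed.
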